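(* Let $M$ be a tame paving matroid. Then $M$ is quasi-paving.
   Context: A matroid $M$ of rank $n$ is a paving matroid if every circuit has cardinality $n$ or $n+1$. A dependent hyperplane of $M$ is a maximal subset of the ground set of cardinality at least $n$ in which every $n$-element subset is a circuit. A paving matroid is tame if any three distinct dependent hyperplanes have empty intersection. Quasi-paving construction: given a positive integer $n\le d$ and a collection $\mathcal{H}=\{H_1,\ldots,H_k\}$ of subsets of $[d]$ any three of which have empty intersection, the matroid on $[d]$ whose circuits are: (Type 1) the $(n-1)$-element subsets contained in the intersection of two distinct members of $\mathcal{H}$; (Type 2) the $n$-element subsets of some $H_i$ containing no Type 1 set; (Type 3) the $(n+1)$-element subsets containing no Type 1 or Type 2 set. A matroid is called quasi-paving (more precisely $n$-quasi-paving) if its set of circuits arises from this construction for some such $\mathcal{H}$ and $n$; $\mathcal{H}$ is then called a representation of it. *)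

From mathcomp Require Import all_boot.
Set Implicit Arguments. Unset Strict Implicit. Unset Printing Implicit Defensive.

(* A matroid on the ground set [d] = 'I_d is given by its set of circuits. *)
Section Matroid.
Variable d : nat.
Implicit Types (C Hs : {set {set 'I_d}}) (S T H : {set 'I_d}).

Definition is_circuit_family C : Prop :=
  [/\ set0 \notin C,
      (forall C1 C2 : {set 'I_d}, C1 \in C -> C2 \in C -> C1 \subset C2 -> C1 = C2) &
      (forall (C1 C2 : {set 'I_d}) (e : 'I_d), C1 \in C -> C2 \in C -> C1 != C2 -> e \in C1 :&: C2 ->
         exists2 C3 : {set 'I_d}, C3 \in C & C3 \subset (C1 :|: C2) :\ e)].

Definition indep C S : bool := [forall X in C, ~~ (X \subset S)].

Definition mrank C : nat := \max_(S : {set 'I_d} | indep C S) #|S|.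

Definition paving C : Prop :=
  forall X : {set 'I_d}, X \in C -> #|X| = mrank C \/ #|X| = (mrank C).+1.

Definition dh_prop C S : bool :=
  (mrank C <= #|S|) &&
  [forall T : {set 'I_d}, ((T \subset S) && (#|T| == mrank C)) ==> (T \in C)].

Definition dep_hyperplane C H : bool := maxset (dh_prop C) H.

Definition tame C : Prop :=
  forall H1 H2 H3 : {set 'I_d}, dep_hyperplane C H1 -> dep_hyperplane C H2 ->
    dep_hyperplane C H3 -> H1 != H2 -> H1 != H3 -> H2 != H3 ->
    H1 :&: H2 :&: H3 = set0.

Definition qp_type1 n Hs S : bool :=
  (#|S| == n.-1) &&
  [exists H1 in Hs, exists H2 in Hs, (H1 != H2) && (S \subset H1 :&: H2)].

Definition qp_type2 n Hs S : bool :=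
  [&& #|S| == n, [exists H in Hs, S \subset H] &
      [forall T : {set 'I_d}, (T \subset S) ==> ~~ qp_type1 n Hs T]].

Definition qp_type3 n Hs S : bool :=
  (#|S| == n.+1) &&
  [forall T : {set 'I_d}, (T \subset S) ==>
      (~~ qp_type1 n Hs T && ~~ qp_type2 n Hs T)].

Definition qp_circuits n Hs : {set {set 'I_d}} :=
  [set S | [|| qp_type1 n Hs S, qp_type2 n Hs S | qp_type3 n Hs S]].

Definition three_wise_disjoint Hs : Prop :=
  forall H1 H2 H3 : {set 'I_d}, H1 \in Hs -> H2 \in Hs -> H3 \in Hs ->
    H1 != H2 -> H1 != H3 -> H2 != H3 -> H1 :&: H2 :&: H3 = set0.

Definition quasi_paving C : Prop :=
  exists n Hs, [/\ 0 < n, n <= d, three_wise_disjoint Hs & C = qp_circuits n Hs].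

End Matroid.

From mathcomp Require Import all_boot.
From mathcomp Require Import zify.

Set Implicit Arguments. Unset Strict Implicit. Unset Printing Implicit Defensive.

(* Take n = rank and the dependent hyperplanes as representation; tameness is
   exactly three-wise disjointness.  In a paving matroid every set of size
   n + 1 is dependent and every n-circuit lies in a dependent hyperplane, so
   all that matters is that there are no Type 1 sets.  If two dependent
   hyperplanes shared an (n-1)-set I, then every n-subset T of their union
   would be a circuit: circuit elimination between two circuits x + I and
   y + I at a point i of I \ T yields the circuit y + (x + I - i), because
   circuits have size at least n; this swaps the points of I into T one at a
   time.  The union would then contradict maximality.  In rank 0 all circuits
   are singletons and one takes n = 1 with the single hyperplane [d]. *)

Definition dep_hyperplanes d (C : {set {set 'I_d}}) : {set {set 'I_d}} :=
  [set H | dep_hyperplane C H].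

Section Circuits.
Variables (d : nat) (C : {set {set 'I_d}}).
Implicit Types (S T H I : {set 'I_d}).

Lemma indep_card_le_rank S : indep C S -> #|S| <= mrank C.
Proof. exact: leq_bigmax_cond. Qed.

Lemma rank_le_card_ground : mrank C <= d.
Proof. by apply/bigmax_leqP => S _; rewrite -[X in _ <= X]card_ord max_card. Qed.

Lemma rank_lt_card_circuit S :
  mrank C < #|S| -> exists2 X, X \in C & X \subset S.
Proof.
rewrite ltnNge => /(contra (@indep_card_le_rank S)).
by rewrite negb_forall_in => /exists_inP[X XC /negPn XS]; exists X.
Qed.

Lemma dh_prop_circuit S T :
  dh_prop C S -> T \subset S -> #|T| = mrank C -> T \in C.
Proof.
by case/andP=> _ /forallP/(_ T)/implyP hS sT cT; apply: hS; rewrite sT cT eqxx.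
Qed.

Lemma circuit_dh_prop S : S \in C -> #|S| = mrank C -> dh_prop C S.
Proof.
move=> SC cS; rewrite /dh_prop cS leqnn; apply/forallP => T.
apply/implyP => /andP[sT /eqP cT].
suff -> : T = S by [].
by apply/eqP; rewrite eqEcard sT cS cT leqnn.
Qed.

Lemma rank_card_circuitE S :
  #|S| = mrank C -> (S \in C) = [exists H in dep_hyperplanes C, S \subset H].
Proof.
move=> cS; apply/idP/exists_inP => [SC | [H]].
  have [H maxH sSH] := maxset_exists (circuit_dh_prop SC cS).
  by exists H; rewrite ?inE.
by rewrite inE => /maxsetp dhH sSH; apply: dh_prop_circuit dhH sSH cS.
Qed.

Hypotheses (hC : is_circuit_family C) (hP : paving C).

Lemma paving_rank_le_card X : X \in C -> mrank C <= #|X|.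
Proof. by case/hP=> ->. Qed.

Lemma paving_circuit_elim C1 C2 e :
  C1 \in C -> C2 \in C -> C1 != C2 -> e \in C1 :&: C2 ->
  #|C1 :|: C2| = (mrank C).+1 -> (C1 :|: C2) :\ e \in C.
Proof.
case: hC => _ _ hE C1C C2C neq eC cU.
have [C3 C3C sC3] := hE _ _ _ C1C C2C neq eC.
suff -> : (C1 :|: C2) :\ e = C3 by [].
have eU : e \in C1 :|: C2 by move: eC; rewrite !inE => /andP[->].
have := cardsD1 e (C1 :|: C2); rewrite eU cU add1n => -[cD].
by apply/eqP; rewrite eq_sym eqEcard sC3 -cD paving_rank_le_card.
Qed.

Lemma adjacent_circuit_exchange I x y i :
  #|I|.+1 = mrank C -> x \notin I -> y \notin I -> x != y -> i \in I ->
  x |: I \in C -> y |: I \in C -> y |: (x |: (I :\ i)) \in C.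
Proof.
move=> cI xI yI xy iI xIC yIC.
have -> : y |: (x |: (I :\ i)) = ((x |: I) :|: (y |: I)) :\ i.
  have ix : i != x by apply: contraNneq xI => <-.
  have iy : i != y by apply: contraNneq yI => <-.
  apply/setP => z; rewrite !inE; case: (z =P i) => [->|_] /=.
    by rewrite (negbTE ix) (negbTE iy).
  by case: (z == x) (z == y) (z \in I) => [] [] [].
apply: paving_circuit_elim => //.
- apply: contraNneq xy => eq; have : x \in y |: I by rewrite -eq setU11.
  by rewrite !inE (negbTE xI) orbF.
- by rewrite !inE iI !orbT.
- have -> : (x |: I) :|: (y |: I) = x |: (y |: I).
    by apply/setP => z; rewrite !inE; case: (z \in I); rewrite ?orbT ?orbF.
  by rewrite !cardsU1 !inE negb_or xy xI yI -cI.
Qed.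

Lemma circuit_of_adjacent_circuits I T :
  #|I|.+1 = mrank C -> #|T| = mrank C -> {in T :\: I, forall x, x |: I \in C} ->
  T \in C.
Proof.
move=> + cT.
have fresh (J : {set 'I_d}) :
    #|J|.+1 = mrank C -> exists2 x, x \in T & x \notin J.
  move=> cJ; have /set0Pn[x] : T :\: J != set0.
    by rewrite setD_eq0; apply/negP => /subset_leq_card; lia.
  by rewrite inE => /andP[xJ xT]; exists x.
move Ek: #|I :\: T| => k; elim: k I Ek => [|k IH] I Ek cI hI;
  have [x xT xI] := fresh I cI;
  have xIC : x |: I \in C by apply: hI; rewrite inE xI xT.
  have sIT : I \subset T by rewrite -setD_eq0 -cards_eq0 Ek.
  suff -> : T = x |: I by [].
  apply/eqP; rewrite eq_sym eqEcard subUset sub1set xT sIT cardsU1 xI cT; lia.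
have [i iIT] : exists i, i \in I :\: T by apply/set0Pn; rewrite -cards_eq0 Ek.
move: (iIT); rewrite inE => /andP[iT iI].
have xIi : x \notin I :\ i by rewrite inE negb_and xI orbT.
apply: (IH (x |: (I :\ i))).
- have -> : (x |: (I :\ i)) :\: T = (I :\: T) :\ i.
    apply/setP => z; rewrite !inE; case: (z =P x) => [->|_] /=.
      by rewrite xT (negbTE xI) !andbF.
    by case: (z == i) (z \in I) (z \in T) => [] [] [].
  by move: Ek; rewrite (cardsD1 i) iIT; lia.
- by rewrite cardsU1 xIi; move: cI; rewrite (cardsD1 i I) iI; lia.
- move=> y; rewrite !inE negb_or negb_and negbK => /andP[/andP[yx /orP yIi] yT].
  have yI : y \notin I by case: yIi => // /eqP yi; rewrite -yi yT in iT.
  apply: adjacent_circuit_exchange => //; first by rewrite eq_sym.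
  by apply: hI; rewrite inE yI yT.
Qed.

Lemma dh_prop_union H1 H2 I :
  dh_prop C H1 -> dh_prop C H2 -> I \subset H1 :&: H2 -> #|I|.+1 = mrank C ->
  dh_prop C (H1 :|: H2).
Proof.
move=> dh1 dh2; rewrite subsetI => /andP[sI1 sI2] cI.
apply/andP; split.
  case/andP: dh1 => rH1 _.
  exact: leq_trans rH1 (subset_leq_card (subsetUl _ _)).
apply/forallP => T; apply/implyP => /andP[sT /eqP cT].
apply: (circuit_of_adjacent_circuits cI cT) => x; rewrite inE => /andP[xI xT].
have cxI : #|x |: I| = mrank C by rewrite cardsU1 xI -cI.
have := subsetP sT x xT; rewrite inE => /orP[xH|xH].
  by apply: dh_prop_circuit dh1 _ cxI; rewrite subUset sub1set xH.
by apply: dh_prop_circuit dh2 _ cxI; rewrite subUset sub1set xH.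
Qed.

Lemma dep_hyperplane_eq H1 H2 I :
  dep_hyperplane C H1 -> dep_hyperplane C H2 -> I \subset H1 :&: H2 ->
  #|I|.+1 = mrank C -> H1 = H2.
Proof.
move=> maxH1 maxH2 sI cI.
have dhU := dh_prop_union (maxsetp maxH1) (maxsetp maxH2) sI cI.
rewrite -(maxsetsup maxH1 dhU (subsetUl _ _)).
exact: maxsetsup maxH2 dhU (subsetUr _ _).
Qed.

Lemma no_qp_type1_dep_hyperplanes T :
  0 < mrank C -> ~~ qp_type1 (mrank C) (dep_hyperplanes C) T.
Proof.
move=> r_gt0; apply/andP.
case=> /eqP cT /exists_inP[H1 + /exists_inP[H2 + /andP[]]].
rewrite !inE => maxH1 maxH2 /eqP neqH sT; apply: neqH.
by apply: dep_hyperplane_eq maxH1 maxH2 sT _; rewrite cT prednK.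
Qed.

Lemma rank0_circuitE S : mrank C = 0 -> (S \in C) = (#|S| == 1).
Proof.
case: hC => C0 _ _ r0; apply/idP/eqP => [SC | cS].
  case: (hP SC); rewrite r0 // => /eqP; rewrite cards_eq0 => /eqP S0.
  by rewrite -S0 SC in C0.
have [|X XC XS] := rank_lt_card_circuit (S := S); first by rewrite r0 cS.
suff -> : S = X by [].
have X0 : X != set0 by apply: contraNneq C0 => <-.
by apply/eqP; rewrite eq_sym eqEcard XS cS card_gt0.
Qed.

End Circuits.

Lemma qp_type1_set1 d n (H T : {set 'I_d}) : qp_type1 n [set H] T = false.
Proof.
apply/negP => /andP[_ /exists_inP[H1 + /exists_inP[H2 +]]].
by rewrite !inE => /eqP-> /eqP->; rewrite eqxx.
Qed.

Section QuasiPavingCircuits.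
Variables (d n : nat) (Hs C : {set {set 'I_d}}).
Hypothesis C_antichain :
  forall C1 C2 : {set 'I_d}, C1 \in C -> C2 \in C -> C1 \subset C2 -> C1 = C2.
Hypothesis card_circuit : forall X, X \in C -> #|X| = n \/ #|X| = n.+1.
Hypothesis card_succ_dep :
  forall S : {set 'I_d}, #|S| = n.+1 -> exists2 X, X \in C & X \subset S.
Hypothesis no_qp_type1 : forall T, ~~ qp_type1 n Hs T.
Hypothesis card_circuitE :
  forall S : {set 'I_d}, #|S| = n -> (S \in C) = [exists H in Hs, S \subset H].

Lemma qp_type2E T : qp_type2 n Hs T = (#|T| == n) && (T \in C).
Proof.
rewrite /qp_type2.
have -> : [forall T0 : {set 'I_d}, (T0 \subset T) ==> ~~ qp_type1 n Hs T0].
  by apply/forallP => T0; rewrite no_qp_type1 implybT.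
by rewrite andbT; case: eqP => // /card_circuitE ->.
Qed.

Lemma circuits_eq_qp_circuits : C = qp_circuits n Hs.
Proof.
apply/setP => S; rewrite inE (negbTE (no_qp_type1 S)) qp_type2E /=.
apply/idP/orP => [SC | [/andP[_ //] | /andP[/eqP cS sub_free]]].
  case: (card_circuit SC) => cS; [left | right]; first by rewrite cS eqxx.
  rewrite /qp_type3 cS eqxx; apply/forallP => T; apply/implyP => sT.
  rewrite no_qp_type1 qp_type2E /=; apply/andP => -[/eqP cT TC].
  by move: cS; rewrite -(C_antichain TC SC sT) cT => /n_Sn.
have [X XC XS] := card_succ_dep cS.
case: (card_circuit XC) => cX.
  by move/forallP: sub_free => /(_ X); rewrite XS qp_type2E cX eqxx XC andbF.
suff -> : S = X by [].
by apply/eqP; rewrite eq_sym eqEcard XS cS cX leqnn.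
Qed.

End QuasiPavingCircuits.

Theorem proposition3p4 (d : nat) (C : {set {set 'I_d}}) :
  0 < d -> is_circuit_family C -> paving C -> tame C -> quasi_paving C.
Proof.
move=> d_gt0 hC hP hT; have [_ C_antichain _] := hC.
have [r0 | r_gt0] := posnP (mrank C).
- exists 1, [set setT]; split => //.
  + by move=> H1 H2 H3; rewrite !inE => /eqP-> /eqP->; rewrite eqxx.
  + apply: circuits_eq_qp_circuits => // [X | S cS | T | S cS].
    * by rewrite rank0_circuitE // => /eqP->; left.
    * by apply: rank_lt_card_circuit; rewrite r0 cS.
    * by rewrite qp_type1_set1.
    * rewrite rank0_circuitE // cS eqxx; symmetry.
      by apply/exists_inP; exists setT; rewrite ?inE ?subsetT.
- exists (mrank C), (dep_hyperplanes C); split => //.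
  + exact: rank_le_card_ground.
  + by move=> H1 H2 H3; rewrite !inE; apply: hT.
  + apply: circuits_eq_qp_circuits => // [S cS | T | ].
    * by apply: rank_lt_card_circuit; rewrite cS.
    * exact: no_qp_type1_dep_hyperplanes.
    * exact: rank_card_circuitE.
Qed.
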